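(* None of the following $4$-dimensional superalgebras (each with $\dim A_0=\dim A_1=2$) admits a superbialgebra structure (even linear $\Delta:A\to A\otimes A$, $\varepsilon:A\to\mathbb{K}$ making it a superbialgebra): (1|2) $\mathbb{K}^4$ with $A_0=\mathrm{span}\{(1,1,1,1),(1,1,0,0)\}$, $A_1=\mathrm{span}\{(1,-1,0,0),(0,0,1,-1)\}$; (3|3) $\mathbb{K}[x]/(x^2)\times\mathbb{K}[y]/(y^2)$ with $A_0=\mathrm{span}\{(1,1),(x,y)\}$, $A_1=\mathrm{span}\{(1,-1),(x,-y)\}$; (5|1) $\mathbb{K}[x]/(x^4)$ with $A_0=\mathrm{span}\{1,x^2\}$, $A_1=\mathrm{span}\{x,x^3\}$; (7|2) $\mathbb{K}[x,y]/(x^2,y^2)$ with $A_0=\mathrm{span}\{1,x\}$, $A_1=\mathrm{span}\{y,xy\}$; (7|3) $\mathbb{K}[x,y]/(x^2,y^2)$ with $A_0=\mathrm{span}\{1,xy\}$, $A_1=\mathrm{span}\{x,y\}$; (8|3) $\mathbb{K}[x,y]/(x^3,xy,y^2)$ with $A_0=\mathrm{span}\{1,x^2\}$, $A_1=\mathrm{span}\{x,y\}$; (10|1) $M_2(\mathbb{K})$ with $A_0$ the diagonal matrices and $A_1$ the off-diagonal matrices; (11|3) the algebra $B=\{a(E_{11}+E_{22})+b(E_{33}+E_{44})+cE_{31}+dE_{24}\}\subset M_4(\mathbb{K})$ with $A_0=\mathrm{span}\{I_4,\,E_{24}+E_{31}\}$, $A_1=\mathrm{span}\{E_{11}+E_{22}-E_{33}-E_{44},\,E_{31}-E_{24}\}$;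 (12|1) $\mathbb{K}\langle x,y\rangle/(x^2,y^2,xy+yx)$ with $A_0=\mathrm{span}\{1,x\}$, $A_1=\mathrm{span}\{y,xy\}$; (16|1) $\mathbb{K}\langle x,y\rangle/(x^2,y^2,yx)$ with $A_0=\mathrm{span}\{1,x\}$, $A_1=\mathrm{span}\{y,xy\}$; (16|2) the same algebra with $A_0=\mathrm{span}\{1,y\}$, $A_1=\mathrm{span}\{x,xy\}$; (16|3) the same algebra with $A_0=\mathrm{span}\{1,xy\}$, $A_1=\mathrm{span}\{x,y\}$; (18;λ|1) for $\lambda\in\mathbb{K}\setminus\{-1,0,1\}$, $\mathbb{K}\langle x,y\rangle/(x^2,y^2,yx-\lambda xy)$ with $A_0=\mathrm{span}\{1,x\}$, $A_1=\mathrm{span}\{y,xy\}$; (18;λ|2) the same algebra with $A_0=\mathrm{span}\{1,xy\}$, $A_1=\mathrm{span}\{x,y\}$; (19|1) $\mathbb{K}\langle x,y\rangle/(y^2,\,x^2+yx,\,xy+yx)$ with $A_0=\mathrm{span}\{1,xy\}$, $A_1=\mathrm{span}\{x,y\}$.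
   Context: $\mathbb{K}$ is an algebraically closed field of characteristic $0$. A superalgebra is an associative unital $\mathbb{K}$-algebra $A=A_0\oplus A_1$ with a $\mathbb{Z}/2\mathbb{Z}$-grading such that $A_iA_j\subseteq A_{i+j}$ and $1\in A_0$; $|a|$ denotes the degree. $A\otimes A$ has product $(a\otimes b)(c\otimes d)=(-1)^{|b||c|}ac\otimes bd$. A superbialgebra is a superalgebra with even linear maps $\Delta:A\to A\otimes A$, $\varepsilon:A\to\mathbb{K}$ ($\mathbb{K}$ in degree $0$) which are coassociative and counital and are unital algebra homomorphisms. $E_{ij}$ denotes the matrix unit. $\mathbb{K}[x,y]/I$ is a quotient of the commutative polynomial ring, $\mathbb{K}\langle x,y\rangle/I$ of the free associative algebra. *)

From HB Require Import structures.
From mathcomp Require Import all_boot all_order all_algebra.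
Set Implicit Arguments. Unset Strict Implicit. Unset Printing Implicit Defensive.
Import Order.TTheory GRing.Theory.
Local Open Scope ring_scope.

(* 4-dimensional superalgebras given by a homogeneous basis e_0,...,e_3      *)
(* with e_0 = 1, e_0,e_1 even and e_2,e_3 odd (dim A_0 = dim A_1 = 2).        *)
(* The multiplication is given by structure constants:                       *)
(*    e_i * e_j = \sum_k mu i j k e_k.                                       *)

(* parity of basis vector e_i : true = odd *)
Definition par (i : 'I_4) : bool := (2 <= i)%N.

Definition ksign (K : nzRingType) (a b : 'I_4) : K := (-1) ^+ (par a && par b).

Definition unitvec (K : nzRingType) (i : nat) : seq K := rcons (nseq i 0) 1.

(* Structure constants from the products e_i e_j for 1 <= i,j <= 3, given as
   coordinate lists [:: c0; c1; c2; c3]; e_0 is the unit. *)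
Definition mk_tbl (K : nzRingType) (m : nat -> nat -> seq K) :
  'I_4 -> 'I_4 -> 'I_4 -> K :=
  fun i j k => nth 0 (if val i == 0%N then unitvec K j
                      else if val j == 0%N then unitvec K i
                      else m (val i) (val j)) k.

(* A superbialgebra structure on the superalgebra with structure constants mu:
   Delta(e_i) = \sum_(j,k) d i j k e_j (x) e_k, eps(e_i) = eps i. *)
Definition is_superbialg (K : nzRingType) (mu : 'I_4 -> 'I_4 -> 'I_4 -> K)
  (d : 'I_4 -> 'I_4 -> 'I_4 -> K) (eps : 'I_4 -> K) : Prop :=
      (forall i j k, par j (+) par k != par i -> d i j k = 0) /\
      (* eps even (K concentrated in degree 0) *)
      (forall i, par i -> eps i = 0) /\
      (* coassociativity: (Delta (x) id) Delta = (id (x) Delta) Delta *)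
      (forall i a b c, \sum_(j < 4) d i j c * d j a b
                       = \sum_(k < 4) d i a k * d k b c) /\
      (* counitality: (eps (x) id) Delta = id = (id (x) eps) Delta *)
      ((forall i k, \sum_(j < 4) d i j k * eps j = (i == k)%:R)
        /\ (forall i j, \sum_(k < 4) d i j k * eps k = (i == j)%:R)) /\
      (* Delta is a unital algebra homomorphism A -> A (x) A (super tensor
         product algebra) *)
      ((forall a b, d ord0 a b = ((a == ord0) && (b == ord0))%:R)
        /\ (forall i j a b,
              \sum_(k < 4) mu i j k * d k a b
              = \sum_(a1 < 4) \sum_(b1 < 4) \sum_(a2 < 4) \sum_(b2 < 4)
                  d i a1 b1 * d j a2 b2 * ksign K b1 a2
                  * mu a1 a2 a * mu b1 b2 b)) /\
      (eps ord0 = 1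
        /\ (forall i j, \sum_(k < 4) mu i j k * eps k = eps i * eps j)).

Definition admits_superbialg (K : nzRingType) (mu : 'I_4 -> 'I_4 -> 'I_4 -> K)
  : Prop := exists d eps, is_superbialg mu d eps.

Section Tables.
Variable K : nzRingType.
Local Notation z := [:: (0:K); 0; 0; 0].
Local Notation v0 := [:: (1:K); 0; 0; 0].
Local Notation v1 := [:: (0:K); 1; 0; 0].
Local Notation v2 := [:: (0:K); 0; 1; 0].
Local Notation v3 := [:: (0:K); 0; 0; 1].

(* (1|2): K^4, e0=(1,1,1,1), e1=(1,1,0,0), e2=(1,-1,0,0), e3=(0,0,1,-1) *)
Definition A1_2 := mk_tbl (fun i j =>
  match i, j with
  | 1, 1 => v1 | 1, 2 => v2 | 2, 1 => v2 | 2, 2 => v1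
  | 3, 3 => [:: 1; -1; 0; 0]%R
  | _, _ => z end)%N.

(* (3|3): K[x]/(x^2) x K[y]/(y^2), e0=(1,1), e1=(x,y), e2=(1,-1), e3=(x,-y) *)
Definition A3_3 := mk_tbl (fun i j =>
  match i, j with
  | 1, 2 => v3 | 2, 1 => v3 | 2, 2 => v0 | 2, 3 => v1 | 3, 2 => v1
  | _, _ => z end)%N.

(* (5|1): K[x]/(x^4), e0=1, e1=x^2, e2=x, e3=x^3 *)
Definition A5_1 := mk_tbl (fun i j =>
  match i, j with
  | 1, 2 => v3 | 2, 1 => v3 | 2, 2 => v1
  | _, _ => z end)%N.

(* (7|2): K[x,y]/(x^2,y^2), e0=1, e1=x, e2=y, e3=xy *)
Definition A7_2 := mk_tbl (fun i j =>
  match i, j with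
  | 1, 2 => v3 | 2, 1 => v3
  | _, _ => z end)%N.

(* (7|3): K[x,y]/(x^2,y^2), e0=1, e1=xy, e2=x, e3=y *)
Definition A7_3 := mk_tbl (fun i j =>
  match i, j with
  | 2, 3 => v1 | 3, 2 => v1
  | _, _ => z end)%N.

(* (8|3): K[x,y]/(x^3,xy,y^2), e0=1, e1=x^2, e2=x, e3=y *)
Definition A8_3 := mk_tbl (fun i j =>
  match i, j with
  | 2, 2 => v1
  | _, _ => z end)%N.

(* (10|1): M_2(K), e0=I, e1=E11, e2=E12, e3=E21 *)
Definition A10_1 := mk_tbl (fun i j =>
  match i, j with
  | 1, 1 => v1 | 1, 2 => v2 | 2, 3 => v1 | 3, 1 => v3
  | 3, 2 => [:: 1; -1; 0; 0]%R
  | _, _ => z end)%N.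

(* (11|3): B subset M_4(K), e0=I_4, e1=E24+E31, e2=E11+E22-E33-E44,
   e3=E31-E24 *)
Definition A11_3 := mk_tbl (fun i j =>
  match i, j with
  | 1, 2 => v3 | 2, 1 => [:: 0; 0; 0; -1]%R | 2, 2 => v0
  | 2, 3 => [:: 0; -1; 0; 0]%R | 3, 2 => v1
  | _, _ => z end)%N.

(* (12|1): K<x,y>/(x^2,y^2,xy+yx), e0=1, e1=x, e2=y, e3=xy *)
Definition A12_1 := mk_tbl (fun i j =>
  match i, j with
  | 1, 2 => v3 | 2, 1 => [:: 0; 0; 0; -1]%R
  | _, _ => z end)%N.

(* (16|1): K<x,y>/(x^2,y^2,yx), e0=1, e1=x, e2=y, e3=xy *)
Definition A16_1 := mk_tbl (fun i j =>
  match i, j with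
  | 1, 2 => v3
  | _, _ => z end)%N.

(* (16|2): same algebra, e0=1, e1=y, e2=x, e3=xy *)
Definition A16_2 := mk_tbl (fun i j =>
  match i, j with
  | 2, 1 => v3
  | _, _ => z end)%N.

(* (16|3): same algebra, e0=1, e1=xy, e2=x, e3=y *)
Definition A16_3 := mk_tbl (fun i j =>
  match i, j with
  | 2, 3 => v1
  | _, _ => z end)%N.

(* (18;l|1): K<x,y>/(x^2,y^2,yx-l xy), e0=1, e1=x, e2=y, e3=xy *)
Definition A18_1 (l : K) := mk_tbl (fun i j =>
  match i, j with
  | 1, 2 => v3 | 2, 1 => [:: 0; 0; 0; l]%R
  | _, _ => z end)%N.

(* (18;l|2): same algebra, e0=1, e1=xy, e2=x, e3=y *)
Definition A18_2 (l : K) := mk_tbl (fun i j =>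
  match i, j with
  | 2, 3 => v1 | 3, 2 => [:: 0; l; 0; 0]%R
  | _, _ => z end)%N.

(* (19|1): K<x,y>/(y^2, x^2+yx, xy+yx), e0=1, e1=xy, e2=x, e3=y;
   here x^2 = xy, yx = -xy. *)
Definition A19_1 := mk_tbl (fun i j =>
  match i, j with
  | 2, 2 => v1 | 2, 3 => v1 | 3, 2 => [:: 0; -1; 0; 0]%R
  | _, _ => z end)%N.
End Tables.

From mathcomp Require Import all_boot all_order all_algebra.
From mathcomp Require Import ring.
Import GRing.Theory.
Set Implicit Arguments. Unset Strict Implicit.
Local Open Scope ring_scope.

(* Let A have basis e0 = 1, e1 (even), e2, e3 (odd), and let a superbialgebra
   structure (Delta, eps) be given.  Since eps is an even algebra map,
   eps(e2) = eps(e3) = 0, and in the cases using Delta also eps(e1) = 0 (e1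
   is either a square-zero even element or a product of odd ones).  Then eps is
   the augmentation and counitality says Delta(x) = x (x) 1 + 1 (x) x modulo
   A+ (x) A+ for x in A+ = span(e1, e2, e3).  Call e_a indecomposable if it
   never occurs in a product of two elements of A+.  For such a, b the
   e_a (x) e_b coefficient of Delta(e_i) Delta(e_j) (i, j > 0) only sees the
   primitive parts, which gives the key identity
     coefficient of e_a (x) e_b in Delta(e_i e_j)
       = [i = a][j = b] + (-1)^(|i||j|) [i = b][j = a].
   Comparing it with the multiplication table yields 2 = 0, 1 + l = 0 or
   1 = 0.  The file first proves this identity (Delta_product_coef), then
   four obstruction lemmas built on it, each covering a family of tables,
   plus a direct counit argument for the tables where 1 is a combination of
   products of odd elements; finally the fifteen cases are read off. *)

Notation e0 := (@ord0 3).
Notation e1 := (@Ordinal 4 1 isT).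
Notation e2 := (@Ordinal 4 2 isT).
Notation e3 := (@Ordinal 4 3 isT).

Lemma sum_dirac (K : nzRingType) (c : 'I_4) (F : 'I_4 -> K) :
  \sum_(j < 4) (j == c)%:R * F j = F c.
Proof.
rewrite (bigD1 c) //= eqxx mul1r big1 ?addr0 // => j /negbTE ->.
by rewrite mul0r.
Qed.

Lemma sum_dirac_r (K : nzRingType) (c : 'I_4) (F : 'I_4 -> K) :
  \sum_(j < 4) F j * (j == c)%:R = F c.
Proof.
by under eq_bigr do rewrite mulr_natr -mulr_natl; exact: sum_dirac.
Qed.

Definition unital_table (K : nzRingType) (mu : 'I_4 -> 'I_4 -> 'I_4 -> K)
  : Prop :=
  forall p k, mu e0 p k = (p == k)%:R /\ mu p e0 k = (p == k)%:R.

Definition indecomposable (K : nzRingType) (mu : 'I_4 -> 'I_4 -> 'I_4 -> K)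
  (a : 'I_4) : Prop :=
  a != e0 /\ forall p q, p != e0 -> q != e0 -> mu p q a = 0.

Lemma ord4_ind (P : 'I_4 -> Prop) :
  P e0 -> P e1 -> P e2 -> P e3 -> forall k, P k.
Proof.
move=> P0 P1 P2 P3 [[|[|[|[|n]]]] lt4] //.
- by rewrite (_ : Ordinal lt4 = e0) //; apply: val_inj.
all: by rewrite (bool_irrelevance lt4 isT).
Qed.

Lemma sum_over_entry (K : nzRingType) (mu : 'I_4 -> 'I_4 -> 'I_4 -> K)
    (a r s : 'I_4) (c : K)    (G : 'I_4 -> 'I_4 -> K) :
  (forall p q, mu p q a = (p == e0)%:R * (q == a)%:R
                          + (q == e0)%:R * (p == a)%:R
                          + (p == r)%:R * (q == s)%:R * c) ->
  \sum_(p < 4) \sum_(q < 4) mu p q a * G p q = G e0 a + G a e0 + c * G r s.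
Proof.
move=> entry.
under eq_bigr => p _ do under eq_bigr => q _ do
  rewrite entry !mulrDl -!mulrA.
under eq_bigr => p _ do rewrite !big_split /= -!mulr_sumr !sum_dirac.
by rewrite !big_split /= !sum_dirac.
Qed.

Lemma indecomposable_entry (K : nzRingType) (mu : 'I_4 -> 'I_4 -> 'I_4 -> K)
    (a p q : 'I_4) :
  unital_table mu -> indecomposable mu a ->
  mu p q a = (p == e0)%:R * (q == a)%:R + (q == e0)%:R * (p == a)%:R.
Proof.
move=> mu_unital [a0 dec].
have [->|p0] := eqVneq p e0.
  by rewrite (mu_unital q a).1 mul1r (eq_sym e0) (negbTE a0) mulr0 addr0.
have [->|q0] := eqVneq q e0.
  by rewrite (mu_unital p a).2 mul1r mul0r add0r.
by rewrite dec // !mul0r addr0.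
Qed.

Lemma sum_indecomposable (K : nzRingType) (mu : 'I_4 -> 'I_4 -> 'I_4 -> K)
    (a : 'I_4) (G : 'I_4 -> 'I_4 -> K) :
  unital_table mu -> indecomposable mu a ->
  \sum_(p < 4) \sum_(q < 4) mu p q a * G p q = G e0 a + G a e0.
Proof.
move=> mu_unital dec.
rewrite (@sum_over_entry _ _ _ e0 e0 0) ?mul0r ?addr0 // => p q.
by rewrite mulr0 addr0; apply: indecomposable_entry.
Qed.

Section SuperBialgebra.
Variables (K : fieldType) (mu d : 'I_4 -> 'I_4 -> 'I_4 -> K) (eps : 'I_4 -> K).
Hypotheses (mu_unital : unital_table mu) (Hsb : is_superbialg mu d eps).

Lemma eps_product i j : \sum_(k < 4) mu i j k * eps k = eps i * eps j.
Proof. by case: Hsb => _ [_ [_ [_ [_ [_ Heps]]]]]. Qed.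

Lemma eps_odd_product i j : par i -> \sum_(k < 4) mu i j k * eps k = 0.
Proof.
by case: Hsb => _ [eps_odd _] odd_i; rewrite eps_product eps_odd ?mul0r.
Qed.

Lemma eps_square_zero : (forall k, mu e1 e1 k = 0) -> eps e1 = 0.
Proof.
move=> sq; apply/eqP; rewrite -[_ == 0]orbb -mulf_eq0 -eps_product.
by rewrite big1 // => k _; rewrite sq mul0r.
Qed.

Lemma eps_odd_product_e1 i j :
  par i -> (forall k, mu i j k = (k == e1)%:R) -> eps e1 = 0.
Proof.
move=> odd_i prod; rewrite -(eps_odd_product j odd_i).
by under eq_bigr do rewrite prod; rewrite sum_dirac.
Qed.

Lemma eps_augmentation : eps e1 = 0 -> forall k, eps k = (k == e0)%:R.
Proof.
case: Hsb => _ [eps_odd [_ [_ [_ [eps_unit _]]]]] eps1.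
by elim/ord4_ind => //; apply: eps_odd.
Qed.

Lemma Delta_counit : eps e1 = 0 ->
  forall i k, d i e0 k = (i == k)%:R /\ d i k e0 = (i == k)%:R.
Proof.
case: Hsb => _ [_ [_ [[counit_l counit_r] _]]] eps1 i k.
split; [rewrite -(counit_l i k) | rewrite -(counit_r i k)];
  by under eq_bigr do rewrite eps_augmentation //; rewrite sum_dirac_r.
Qed.

Lemma Delta_product_expansion i j a b :
  \sum_(k < 4) mu i j k * d k a b =
  \sum_(a1 < 4) \sum_(a2 < 4) mu a1 a2 a *
    \sum_(b1 < 4) \sum_(b2 < 4) mu b1 b2 b *
      (d i a1 b1 * d j a2 b2 * ksign K b1 a2).
Proof.
case: Hsb => _ [_ [_ [_ [[_ Delta_mul] _]]]]; rewrite Delta_mul.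
apply: eq_bigr => a1 _; rewrite exchange_big; apply: eq_bigr => a2 _.
rewrite mulr_sumr; apply: eq_bigr => b1 _; rewrite mulr_sumr.
by apply: eq_bigr => b2 _; ring.
Qed.

(* The key identity: on indecomposable e_a (x) e_b, Delta(e_i e_j) has the
   coefficient of (e_i (x) 1 + 1 (x) e_i)(e_j (x) 1 + 1 (x) e_j). *)
Lemma Delta_product_coef i j a b :
  eps e1 = 0 -> i != e0 -> j != e0 ->
  indecomposable mu a -> indecomposable mu b ->
  \sum_(k < 4) mu i j k * d k a b =
  (i == a)%:R * (j == b)%:R + ksign K i j * ((i == b)%:R * (j == a)%:R).
Proof.
move=> eps1 i0 j0 dec_a dec_b; have counit := Delta_counit eps1.
rewrite Delta_product_expansion (sum_indecomposable _ mu_unital dec_a).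
rewrite !(sum_indecomposable _ mu_unital dec_b) !(counit _ _).1 !(counit _ _).2.
rewrite (negbTE i0) (negbTE j0) [ksign _ e0 e0]/ksign /= expr0.
have [<-|_] := eqVneq i b; have [<-|_] := eqVneq j a; rewrite /=; ring.
Qed.

End SuperBialgebra.

(* If 1 is a combination of products of odd elements, eps(1) = 0. *)
Lemma no_superbialg_unit_in_odd_products (K : fieldType)
    (mu : 'I_4 -> 'I_4 -> 'I_4 -> K) (i j i' j' : 'I_4) (c : K) :
  par i -> par i' -> (forall k, mu i j k + c * mu i' j' k = (k == e0)%:R) ->
  ~ admits_superbialg mu.
Proof.
move=> odd_i odd_i' unit_eq [d [eps Hsb]].
have eps_unit : eps e0 = 1 by case: Hsb => _ [_ [_ [_ [_ []]]]].
have := sum_dirac e0 eps; under eq_bigr do rewrite -unit_eq mulrDl -mulrA.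
rewrite big_split /= -mulr_sumr !(eps_odd_product Hsb) // mulr0 addr0 eps_unit.
by move/eqP; rewrite eq_sym oner_eq0.
Qed.

(* An indecomposable even e1 with e1^2 = 0 forces 0 = 2 (coefficient of
   e1 (x) e1 in Delta(e1)^2). *)
Lemma no_superbialg_square_zero (K : fieldType)
    (mu : 'I_4 -> 'I_4 -> 'I_4 -> K) :
  (2%:R : K) != 0 -> unital_table mu ->
  (forall k, mu e1 e1 k = 0) -> indecomposable mu e1 -> ~ admits_superbialg mu.
Proof.
move=> two mu_unital sq dec [d [eps Hsb]].
have := Delta_product_coef (i := e1) (j := e1) mu_unital Hsb
  (eps_square_zero Hsb sq) isT isT dec dec.
rewrite big1 => [|k _]; last by rewrite sq mul0r.
by rewrite /ksign /= expr0 !mulr1 => /esym/eqP; apply/negP.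
Qed.

(* Odd indecomposables with e2 e3 = e1 and e3 e2 = l e1 force l = -1
   (coefficients of e2 (x) e3 in Delta(e2 e3) and Delta(e3 e2)). *)
Lemma no_superbialg_odd_pair (K : fieldType)
    (mu : 'I_4 -> 'I_4 -> 'I_4 -> K) (l : K) :
  1 + l != 0 -> unital_table mu ->
  (forall k, mu e2 e3 k = (k == e1)%:R) ->
  (forall k, mu e3 e2 k = l * (k == e1)%:R) ->
  indecomposable mu e2 -> indecomposable mu e3 -> ~ admits_superbialg mu.
Proof.
move=> l_ne mu_unital prod23 prod32 dec2 dec3 [d [eps Hsb]].
have eps1 := eps_odd_product_e1 (i := e2) Hsb isT prod23.
have := Delta_product_coef (i := e2) (j := e3) mu_unital Hsb eps1
  isT isT dec2 dec3.
under eq_bigr do rewrite prod23.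
rewrite sum_dirac /= !(mulr1, mul0r, mulr0, addr0) => coef23.
have := Delta_product_coef (i := e3) (j := e2) mu_unital Hsb eps1
  isT isT dec2 dec3.
under eq_bigr do rewrite prod32 -mulrA.
rewrite -mulr_sumr sum_dirac coef23 /ksign /= expr1 !(mulr1, mul0r, add0r).
move=> coef32.
by rewrite coef32 addrN eqxx in l_ne.
Qed.

(* Odd indecomposables with e2^2 = e1 and e2 e3 = c e1 contradict each other
   at the e3 (x) e2 coefficient: 0 from e2^2, -1 from e2 e3. *)
Lemma no_superbialg_odd_square (K : fieldType)
    (mu : 'I_4 -> 'I_4 -> 'I_4 -> K) (c : K) :
  unital_table mu ->
  (forall k, mu e2 e2 k = (k == e1)%:R) ->
  (forall k, mu e2 e3 k = c * (k == e1)%:R) ->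
  indecomposable mu e2 -> indecomposable mu e3 -> ~ admits_superbialg mu.
Proof.
move=> mu_unital prod22 prod23 dec2 dec3 [d [eps Hsb]].
have eps1 := eps_odd_product_e1 (i := e2) Hsb isT prod22.
have := Delta_product_coef (i := e2) (j := e2) mu_unital Hsb eps1
  isT isT dec3 dec2.
under eq_bigr do rewrite prod22.
rewrite sum_dirac /= !(mulr0, mul0r, addr0) => coef22.
have := Delta_product_coef (i := e2) (j := e3) mu_unital Hsb eps1
  isT isT dec3 dec2.
under eq_bigr do rewrite prod23 -mulrA.
rewrite -mulr_sumr sum_dirac coef22 /ksign /= expr1.
rewrite !(mulr0, mul0r, mulr1, add0r).
by move/eqP; rewrite eq_sym oppr_eq0 oner_eq0.
Qed.

(* For e2 odd indecomposable with e2^2 = e1, e1^2 = 0, e1 decomposing only as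
   e2 e2: the e2 (x) e2 part of Delta(e1) vanishes, and then the e1 (x) e1
   coefficient of Delta(e1)^2 = 0 is 2. *)
Lemma no_superbialg_odd_square_root (K : fieldType)
    (mu : 'I_4 -> 'I_4 -> 'I_4 -> K) :
  (2%:R : K) != 0 -> unital_table mu ->
  (forall k, mu e2 e2 k = (k == e1)%:R) -> (forall k, mu e1 e1 k = 0) ->
  (forall p q, mu p q e1 = (p == e0)%:R * (q == e1)%:R
                           + (q == e0)%:R * (p == e1)%:R
                           + (p == e2)%:R * (q == e2)%:R * 1) ->
  indecomposable mu e2 -> ~ admits_superbialg mu.
Proof.
move=> two mu_unital prod22 sq entry1 dec2 [d [eps Hsb]].
have eps1 := eps_odd_product_e1 (i := e2) Hsb isT prod22.
have := Delta_product_coef (i := e2) (j := e2) mu_unital Hsb eps1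
  isT isT dec2 dec2.
under eq_bigr do rewrite prod22.
rewrite sum_dirac /ksign /= expr1 mulr1 mulN1r subrr => coef22.
have counit_l i k := (Delta_counit Hsb eps1 i k).1.
have counit_r i k := (Delta_counit Hsb eps1 i k).2.
have := Delta_product_expansion Hsb e1 e1 e1 e1.
rewrite big1 => [|k _]; last by rewrite sq mul0r.
rewrite (sum_over_entry _ entry1) !(sum_over_entry _ entry1).
rewrite !counit_l !counit_r coef22.
rewrite /ksign /= => /esym coef11.
by apply: (negP two); apply/eqP; rewrite -coef11; ring.
Qed.

Ltac case_ord4 := case=> [[|[|[|[|?]]]] ?] //=.

Lemma mk_tbl_unital (K : nzRingType) (m : nat -> nat -> seq K) :
  unital_table (mk_tbl m).
Proof. by do 2 case_ord4. Qed.

Ltac table_fact :=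
  first [ exact: mk_tbl_unital
        | (try split=> //); do ?case_ord4;
          rewrite ?(mul0r, mulr0, mul1r, mulr1, addr0, add0r, subrr); done ].

Section FifteenSuperalgebras.
Variable K : fieldType.
Hypothesis two : (2%:R : K) != 0.

Lemma no_A1_2 : ~ admits_superbialg (A1_2 K).
Proof.
by apply: (@no_superbialg_unit_in_odd_products _ _ e2 e2 e3 e3 1); table_fact.
Qed.

Lemma no_A3_3 : ~ admits_superbialg (A3_3 K).
Proof.
by apply: (@no_superbialg_unit_in_odd_products _ _ e2 e2 e2 e2 0); table_fact.
Qed.

Lemma no_A10_1 : ~ admits_superbialg (A10_1 K).
Proof.
by apply: (@no_superbialg_unit_in_odd_products _ _ e2 e3 e3 e2 1); table_fact.
Qed.

Lemma no_A11_3 : ~ admits_superbialg (A11_3 K).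
Proof.
by apply: (@no_superbialg_unit_in_odd_products _ _ e2 e2 e2 e2 0); table_fact.
Qed.

Lemma no_A5_1 : ~ admits_superbialg (A5_1 K).
Proof. by apply: no_superbialg_odd_square_root => //; table_fact. Qed.

Lemma no_A7_2 : ~ admits_superbialg (A7_2 K).
Proof. by apply: no_superbialg_square_zero => //; table_fact. Qed.

Lemma no_A12_1 : ~ admits_superbialg (A12_1 K).
Proof. by apply: no_superbialg_square_zero => //; table_fact. Qed.

Lemma no_A16_1 : ~ admits_superbialg (A16_1 K).
Proof. by apply: no_superbialg_square_zero => //; table_fact. Qed.

Lemma no_A16_2 : ~ admits_superbialg (A16_2 K).
Proof. by apply: no_superbialg_square_zero => //; table_fact. Qed.

Lemma no_A18_1 (l : K) : ~ admits_superbialg (A18_1 l).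
Proof. by apply: no_superbialg_square_zero => //; table_fact. Qed.

Lemma no_A7_3 : ~ admits_superbialg (A7_3 K).
Proof. by apply: (@no_superbialg_odd_pair _ _ 1) => //; table_fact. Qed.

Lemma no_A16_3 : ~ admits_superbialg (A16_3 K).
Proof.
by apply: (@no_superbialg_odd_pair _ _ 0); rewrite ?addr0 ?oner_eq0; table_fact.
Qed.

Lemma no_A18_2 (l : K) : 1 + l != 0 -> ~ admits_superbialg (A18_2 l).
Proof.
by move=> l_ne; apply: (@no_superbialg_odd_pair _ _ l) => //; table_fact.
Qed.

Lemma no_A8_3 : ~ admits_superbialg (A8_3 K).
Proof. by apply: (@no_superbialg_odd_square _ _ 0); table_fact. Qed.

Lemma no_A19_1 : ~ admits_superbialg (A19_1 K).
Proof. by apply: (@no_superbialg_odd_square _ _ 1); table_fact. Qed.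

End FifteenSuperalgebras.

Theorem proposition4p7 (K : closedFieldType) (charK0 : [pchar K] =i pred0) :
  ~ admits_superbialg (A1_2 K) /\ ~ admits_superbialg (A3_3 K) /\
      ~ admits_superbialg (A5_1 K) /\ ~ admits_superbialg (A7_2 K) /\
      ~ admits_superbialg (A7_3 K) /\ ~ admits_superbialg (A8_3 K) /\
      ~ admits_superbialg (A10_1 K) /\ ~ admits_superbialg (A11_3 K) /\
      ~ admits_superbialg (A12_1 K) /\ ~ admits_superbialg (A16_1 K) /\
      ~ admits_superbialg (A16_2 K) /\ ~ admits_superbialg (A16_3 K) /\
      (forall l : K, l != -1 -> l != 0 -> l != 1 ->
         ~ admits_superbialg (A18_1 l) /\ ~ admits_superbialg (A18_2 l))
  /\ ~ admits_superbialg (A19_1 K).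
Proof.
have two : (2%:R : K) != 0 by rewrite ((pcharf0P _).1 charK0 2).
split; first exact: no_A1_2.
split; first exact: no_A3_3.
split; first exact: no_A5_1.
split; first exact: no_A7_2.
split; first exact: no_A7_3.
split; first exact: no_A8_3.
split; first exact: no_A10_1.
split; first exact: no_A11_3.
split; first exact: no_A12_1.
split; first exact: no_A16_1.
split; first exact: no_A16_2.
split; first exact: no_A16_3.
split; last exact: no_A19_1.
move=> l l_ne_m1 _ _; split; first exact: no_A18_1.
by apply: no_A18_2; rewrite addrC addr_eq0.
Qed.
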